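(* Let $P$ be a 6-stack. If $Q$ is a proper retract of $P$ which (with the induced order) is isomorphic to a tower of sections, then $Q$ is a 4-tower.
   Context: All posets are finite. For a poset $P$ and $p\in P$, the rank $r(p)$ of $p$ is the largest $m$ such that there is a chain $p_0<\dots<p_m=p$ in $P$. $P$ is ranked of rank $r(P)$ if every maximal chain has exactly $r(P)+1$ elements. For $0\le i\le j$, $P(i,j)=\{p\in P:i\le r(p)\le j\}$, $P(i)=P(i,i)$ (induced order). A subset $Q\subseteq P$ (induced order) is a retract of $P$ if there is an order-preserving $f:P\to Q$ with $f(q)=q$ for all $q\in Q$; it is proper if $Q\ne P$. The 6-crown $C_6$ is the poset on $\{x_0,x_1,x_2,y_0,y_1,y_2\}$ whose only strict comparabilities are $x_0<y_0>x_1<y_1>x_2<y_2>x_0$. A 6-stack is a ranked poset $P$ of rank $n\ge1$ such that $P(i,i+1)\cong C_6$ for each $0\le i<n$. The ordinal sum of posets $P_1,\dots,P_k$ ($k\ge1$) is their disjoint union ordered by the orders of the $P_i$ together with $p<q$ whenever $p\in P_i,q\in P_j,i<j$. A 4-tower is an ordinal sum of one or more two-element antichains. A section is either a two-element antichain or a poset on the set $\{[i,k]: 0\le i\le 2,\ 0\le k\le n\}$ (with $3(n+1)$ distinct elements), for some $n\ge 1$, such that: (1) $[i,k]<[i,l]$ whenever $0\le k<l\le n$; (2) for each $k$, $\{[0,k],[1,k],[2,k]\}$ is an antichain; (3) $[i,k]<[j,l]$ implies $[i+1,k]<[j+1,l]$ (first indices mod $3$); (4) for each $0\le k<n$ there are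 $i,j$ with $[i,k]\not<[j,k+1]$. A tower of sections is an ordinal sum of one or more sections. *)

(* Finite posets are given as a finType with a strict order
   relation [lt] (irreflexive, transitive); subposets carry the induced order. *)
From mathcomp Require Import all_boot.

Set Implicit Arguments.
Unset Strict Implicit.
Unset Printing Implicit Defensive.

Definition strict_order (T : finType) (lt : rel T) : Prop :=
  irreflexive lt /\ transitive lt.

Definition leR (T : finType) (lt : rel T) (x y : T) : bool := (x == y) || lt x y.

Definition is_chain (T : finType) (lt : rel T) (C : {set T}) : bool :=
  [forall x in C, forall y in C, (x == y) || lt x y || lt y x].

(* r(p) = largest m such that there is a chain p_0 < ... < p_m = p, i.e. the
   largest size (minus one) of a chain whose maximum is p *)
Definition rank (T : finType) (lt : rel T) (p : T) : nat :=
  \max_(C : {set T} | [&& is_chain lt C, p \in C & [forall x in C, leR lt x p]])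
     (#|C|).-1.

Definition maximal_chain (T : finType) (lt : rel T) (C : {set T}) : Prop :=
  is_chain lt C /\ forall D : {set T}, is_chain lt D -> C \subset D -> D = C.

Definition ranked_of_rank (T : finType) (lt : rel T) (n : nat) : Prop :=
  forall C : {set T}, maximal_chain lt C -> #|C| = n.+1.

Definition level (T : finType) (lt : rel T) (i j : nat) : {set T} :=
  [set p | i <= rank lt p <= j].

Definition ord_iso (T : finType) (lt : rel T) (A : {set T})
    (U : finType) (ltU : rel U) (B : {set U}) : Prop :=
  exists f : T -> U,
    [/\ {in A &, injective f}, f @: A = B &
        {in A &, forall x y, ltU (f x) (f y) = lt x y}].

(* The 6-crown: inl i = x_i, inr j = y_j ; x_i < y_i and x_i < y_{i-1} *)
Definition C6T : finType := ('I_3 + 'I_3)%type.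
Definition C6_lt : rel C6T := fun a b =>
  match a, b with
  | inl i, inr j => (val j == val i) || ((val j).+1 %% 3 == val i)
  | _, _ => false
  end.

Definition six_stack (T : finType) (lt : rel T) : Prop :=
  strict_order lt /\
  exists n, 0 < n /\ ranked_of_rank lt n /\
    forall i, i < n -> ord_iso lt (level lt i i.+1) C6_lt [set: C6T].

Definition order_preserving (T : finType) (lt : rel T) (f : T -> T) : Prop :=
  forall x y, leR lt x y -> leR lt (f x) (f y).

Definition is_retract (T : finType) (lt : rel T) (Q : {set T}) : Prop :=
  exists f : T -> T,
    [/\ forall x, f x \in Q, order_preserving lt f & forall q, q \in Q -> f q = q].

Definition AC2_lt : rel bool := fun _ _ => false.

Definition succ3 (i : 'I_3) : 'I_3 := inord ((val i).+1 %% 3).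

(* a (non-antichain) section order on {[i,k] : 0 <= i <= 2, 0 <= k <= n} *)
Definition section_rel (n : nat) (R : rel ('I_3 * 'I_n.+1)) : Prop :=
  [/\ strict_order R,
      (forall (i : 'I_3) (k l : 'I_n.+1), k < l -> R (i, k) (i, l)),
      (forall (k : 'I_n.+1) (i j : 'I_3), ~~ R (i, k) (j, k)),
      (forall (i j : 'I_3) (k l : 'I_n.+1),
          R (i, k) (j, l) -> R (succ3 i, k) (succ3 j, l)) &
      (forall k : 'I_n.+1, k < n ->
          exists i j : 'I_3, ~~ R (i, k) (j, inord k.+1))].

Definition is_section (U : finType) (lt : rel U) (B : {set U}) : Prop :=
  ord_iso lt B AC2_lt [set: bool] \/
  exists n (R : rel ('I_3 * 'I_n.+1)),
    [/\ 0 < n, section_rel R & ord_iso lt B R [set: ('I_3 * 'I_n.+1)%type]].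

Definition ordinal_sum_of (U : finType) (lt : rel U)
    (good : {set U} -> Prop) : Prop :=
  exists k (blk : U -> 'I_k),
    [/\ 0 < k, forall b : 'I_k, good [set x | blk x == b] &
        forall x y, blk x != blk y -> lt x y = (blk x < blk y)].

Definition tower_of_sections (U : finType) (lt : rel U) : Prop :=
  strict_order lt /\ ordinal_sum_of lt (is_section lt).

Definition four_tower (U : finType) (lt : rel U) : Prop :=
  strict_order lt /\
  ordinal_sum_of lt (fun B => ord_iso lt B AC2_lt [set: bool]).

From mathcomp Require Import all_boot zify.

Set Implicit Arguments.
Unset Strict Implicit.
Unset Printing Implicit Defensive.

(* A 6-stack P of rank N is self-dual, each of its levels has three elements,
   elements whose ranks differ by at least two are comparable, and three pairwise
   incomparable elements always form a full level.  If some block of the tower of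
   sections Q were a genuine section, it would contain a three-element antichain,
   so Q would contain a full level of P.  A retract Q containing level b also
   contains level b+1: if Q meets level b+1 in q, then q, an element of level b
   not below q and another one below q lie in a single block, which must be a
   section, so the level of q is full; if Q misses level b+1, the retraction maps
   a common lower cover at level b+1 of two distinct minimal elements of Q above
   level b+1 onto both of them.  By duality Q also contains level b-1, hence
   Q = P, contradicting properness. *)

Definition flip (T : Type) (lt : rel T) : rel T := fun x y => lt y x.

Definition incomp (T : Type) (lt : rel T) : rel T :=
  fun x y => ~~ lt x y && ~~ lt y x.

Definition antichain3 (T : eqType) (lt : rel T) (a b c : T) : bool :=
  [&& a != b, a != c, b != c, incomp lt a b, incomp lt a c & incomp lt b c].

Lemma incompC (T : Type) (lt : rel T) : symmetric (incomp lt).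
Proof. by move=> x y; rewrite /incomp andbC. Qed.

Lemma incomp_flip (T : Type) (lt : rel T) x y : incomp (flip lt) x y = incomp lt x y.
Proof. by rewrite /incomp /flip andbC. Qed.

Lemma antichain3_flip (T : eqType) (lt : rel T) a b c :
  antichain3 (flip lt) a b c = antichain3 lt a b c.
Proof. by rewrite /antichain3 !(incomp_flip lt). Qed.

Lemma leR_flip (T : finType) (lt : rel T) x y : leR (flip lt) x y = leR lt y x.
Proof. by rewrite /leR eq_sym. Qed.

Section Rank.
Variables (T : finType) (lt : rel T).

Definition rank_chain (p : T) (C : {set T}) : bool :=
  [&& is_chain lt C, p \in C & [forall x in C, leR lt x p]].

Lemma rank_chain_le p C : rank_chain p C -> (#|C|).-1 <= rank lt p.
Proof. by move=> pC; apply: (leq_bigmax_cond (P := rank_chain p)). Qed.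

Lemma rank_chain_max p : exists2 C, rank_chain p C & rank lt p = (#|C|).-1.
Proof.
have p_chain : rank_chain p [set p].
  rewrite /rank_chain set11 /=; apply/andP; split.
    by apply/forall_inP => x /set1P ->; apply/forall_inP => y /set1P ->; rewrite eqxx.
  by apply/forall_inP => x /set1P ->; rewrite /leR eqxx.
have [|C pC rankC] := @eq_bigmax_cond _ (rank_chain p) (fun C => (#|C|).-1).
  by apply/card_gt0P; exists [set p].
by exists C.
Qed.

Lemma chain_subset (C D : {set T}) : C \subset D -> is_chain lt D -> is_chain lt C.
Proof.
move=> /subsetP CD chD; apply/forall_inP => x xC; apply/forall_inP => y yC.
exact: (forall_inP (forall_inP chD x (CD _ xC)) y (CD _ yC)).
Qed.

Lemma rank_le_ranked N : ranked_of_rank lt N -> forall p, rank lt p <= N.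
Proof.
move=> ranked p; have [C /and3P[chC _ _] ->] := rank_chain_max p.
have chainC : is_chain lt C && (C \subset C) by rewrite chC subxx.
case: (@arg_maxnP _ C (fun D => is_chain lt D && (C \subset D)) (fun D => #|D|) chainC)
  => D /andP[chD CD] Dmax.
have maxD : maximal_chain lt D.
  split=> // E chE DE; apply/eqP; rewrite eq_sym eqEcard DE /=.
  by apply: Dmax; rewrite chE (subset_trans CD DE).
by have := subset_leq_card CD; rewrite (ranked D maxD); case: #|C|.
Qed.

Hypotheses (lt_irr : irreflexive lt) (lt_trans : transitive lt).

Lemma rank_lt x y : lt x y -> rank lt x < rank lt y.
Proof.
move=> xy; have [C /and3P[chC xC Cx] ->] := rank_chain_max x.
have Cy z : z \in C -> lt z y.
  by move=> /(forall_inP Cx); rewrite /leR => /predU1P[->|/lt_trans]; last exact.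
have yC : y \notin C by apply/negP => /Cy; rewrite lt_irr.
have : rank_chain y (y |: C).
  rewrite /rank_chain setU11 /=; apply/andP; split.
    apply/forall_inP => z /setU1P[->|zC]; apply/forall_inP => w /setU1P[->|wC].
    - by rewrite eqxx.
    - by rewrite Cy ?orbT.
    - by rewrite Cy ?orbT.
    - exact: (forall_inP (forall_inP chC z zC) w wC).
  by apply/forall_inP => z /setU1P[->|/Cy zy]; rewrite /leR ?eqxx ?zy ?orbT.
move/rank_chain_le; rewrite cardsU1 yC /=.
have : 0 < #|C| by apply/card_gt0P; exists x.
lia.
Qed.

Lemma rank_pred p r : rank lt p = r.+1 -> exists2 z, lt z p & rank lt z = r.
Proof.
move=> rp; have [C /and3P[chC pC Cp] rankC] := rank_chain_max p.
have Cp_card : #|C :\ p| = r.+1 by move: rp; rewrite rankC (cardsD1 p C) pC.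
have [z0 z0C] : exists z0, z0 \in C :\ p by apply/card_gt0P; rewrite Cp_card.
case: (@arg_maxnP _ z0 (mem (C :\ p)) (rank lt) z0C) => z zCp zmax.
have /setD1P[zp zC] := zCp.
have zp_lt : lt z p by move: (forall_inP Cp z zC); rewrite /leR (negbTE zp).
have below_z c : c \in C :\ p -> leR lt c z.
  move=> cCp; have /setD1P[_ cC] := cCp.
  have := forall_inP (forall_inP chC c cC) z zC.
  rewrite /leR -orbA => /or3P[-> | -> | zc]; rewrite ?orbT //.
  by move: (zmax c cCp); rewrite /= leqNgt (rank_lt zc).
have : rank_chain z (C :\ p).
  rewrite /rank_chain (chain_subset (subsetDl C [set p]) chC) (zCp : z \in C :\ p) /=.
  exact/forall_inP.
move/rank_chain_le; rewrite Cp_card /= => rz.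
by exists z => //; apply/eqP; rewrite eqn_leq rz andbT -ltnS -rp rank_lt.
Qed.

End Rank.

(* The properties of the rank function of a 6-stack used below; the list is
   closed under order duality, see [stack_like_flip]. *)
Record stack_like (T : finType) (lt : rel T) (lev : T -> nat) (N : nat) : Prop :=
  StackLike {
  stack_trans : transitive lt;
  stack_lt_lev : forall x y, lt x y -> lev x < lev y;
  stack_lev2_lt : forall x y, (lev x).+2 <= lev y -> lt x y;
  stack_lev_le : forall x, lev x <= N;
  stack_lev_inhabited : forall r, r <= N -> exists x, lev x = r;
  stack_not_below : forall y, 0 < lev y -> exists2 x, lev x = (lev y).-1 & ~~ lt x y;
  stack_not_above : forall x, lev x < N -> exists2 y, lev y = (lev x).+1 & ~~ lt x y;
  stack_two_below : forall y, 0 < lev y -> exists x1 x2,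
    [/\ x1 != x2, lev x1 = (lev y).-1, lev x2 = (lev y).-1, lt x1 y & lt x2 y];
  stack_two_above : forall x, lev x < N -> exists y1 y2,
    [/\ y1 != y2, lev y1 = (lev x).+1, lev y2 = (lev x).+1, lt x y1 & lt x y2];
  stack_common_below : forall y1 y2, y1 != y2 -> lev y1 = lev y2 -> 0 < lev y1 ->
    exists2 x, lev x = (lev y1).-1 & lt x y1 && lt x y2;
  stack_common_above : forall x1 x2, x1 != x2 -> lev x1 = lev x2 -> lev x1 < N ->
    exists2 y, lev y = (lev x1).+1 & lt x1 y && lt x2 y;
  stack_antichain_level : forall a b c x,
    antichain3 lt a b c -> lev x = lev a -> x \in [:: a; b; c] }.

Lemma stack_like_flip (T : finType) (lt : rel T) lev N :
  stack_like lt lev N -> stack_like (flip lt) (fun x => N - lev x) N.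
Proof.
case=> lt_trans lt_lev lev2_lt lev_le lev_inh not_below not_above
  two_below two_above common_below common_above antichain_level.
split.
- by move=> y x z xy yz; apply: lt_trans yz xy.
- by move=> x y /lt_lev; have := lev_le x; lia.
- by move=> x y le2; apply: lev2_lt; have := lev_le x; have := lev_le y; lia.
- by move=> x; apply: leq_subr.
- by move=> r rN; have [|x xr] := lev_inh (N - r); [apply: leq_subr | exists x; lia].
- move=> y y_gt0; have [|x xr] := not_above y; first lia.
  by exists x => //; rewrite xr; lia.
- move=> x x_lt; have [|y yr] := not_below x; first by have := lev_le x; lia.
  by exists y => //; rewrite yr; have := lev_le x; lia.
- move=> y y_gt0; have [|x1 [x2 [ne r1 r2 l1 l2]]] := two_above y; first lia.
  by exists x1, x2; rewrite r1 r2; split => //; lia.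
- move=> x x_lt; have [|y1 [y2 [ne r1 r2 l1 l2]]] := two_below x.
    by have := lev_le x; lia.
  by exists y1, y2; rewrite r1 r2; split => //; have := lev_le x; lia.
- move=> y1 y2 ne e y_gt0; have := lev_le y1; have := lev_le y2 => le2 le1.
  have [||x xr l] := common_above y1 y2 ne; [lia.. |].
  by exists x => //; rewrite xr; lia.
- move=> x1 x2 ne e x_lt; have := lev_le x1; have := lev_le x2 => le2 le1.
  have [||y yr l] := common_below x1 x2 ne; [lia.. |].
  by exists y => //; rewrite yr; lia.
- move=> a b c x; rewrite (antichain3_flip lt) => abc xa; apply: antichain_level => //.
  by have := lev_le x; have := lev_le a; lia.
Qed.

Section StackLike.
Variables (T : finType) (lt : rel T) (lev : T -> nat) (N : nat).
Hypothesis S : stack_like lt lev N.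

Lemma stack_incomp_lev x y : lev x = lev y -> incomp lt x y.
Proof. by move=> e; apply/andP; split; apply/negP => /(stack_lt_lev S); rewrite e ltnn. Qed.

Lemma stack_lev_incomp x y : incomp lt x y -> lev y <= (lev x).+1.
Proof. by case/andP=> nxy _; rewrite leqNgt; apply: contra nxy; exact: (stack_lev2_lt S). Qed.

Lemma stack_below_at b x : b.+2 <= lev x -> exists2 w, lev w = b.+1 & lt w x.
Proof.
move=> bx; case: (ltngtP (lev x) b.+2) => [x2 | x3 | ex]; first by rewrite ltnNge bx in x2.
- have [|w wb] := stack_lev_inhabited S (r := b.+1); first by have := stack_lev_le S x; lia.
  by exists w => //; apply: (stack_lev2_lt S); rewrite wb.
- have [|w1 [w2 [_ r1 _ l1 _]]] := stack_two_below S (y := x); first by rewrite ex.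
  by exists w1; rewrite // r1 ex.
Qed.

Lemma stack_common_lower b x y : x != y -> b.+2 <= lev x -> b.+2 <= lev y ->
  exists2 w, lev w = b.+1 & lt w x && lt w y.
Proof.
move=> xy hx hy.
have [[ex ey] | [x3 | y3]] :
    (lev x = b.+2 /\ lev y = b.+2) \/ b.+2 < lev x \/ b.+2 < lev y by lia.
- have [||w wb l] := stack_common_below S xy; [by rewrite ex ey | by rewrite ex |].
  by exists w; rewrite // wb ex.
- have [w wb wy] := stack_below_at hy.
  by exists w; rewrite // wy andbT; apply: (stack_lev2_lt S); rewrite wb.
- have [w wb wx] := stack_below_at hx.
  by exists w; rewrite // wx; apply: (stack_lev2_lt S); rewrite wb.
Qed.

End StackLike.

Definition crown (i j : 'I_3) : bool := C6_lt (inl i) (inr j).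

Ltac case_ord3 i := case: i => [[|[|[|?]]] ?] //.
Ltac exists_ord3 :=
  exists (@Ordinal 3 0 isT) + exists (@Ordinal 3 1 isT) + exists (@Ordinal 3 2 isT).

Lemma crown_not_below j : exists i, ~~ crown i j.
Proof. by case_ord3 j; exists_ord3. Qed.

Lemma crown_not_above i : exists j, ~~ crown i j.
Proof. by case_ord3 i; exists_ord3. Qed.

Lemma crown_two_below j : exists i1 i2, [&& i1 != i2, crown i1 j & crown i2 j].
Proof. by case_ord3 j; exists_ord3; exists_ord3. Qed.

Lemma crown_two_above i : exists j1 j2, [&& j1 != j2, crown i j1 & crown i j2].
Proof. by case_ord3 i; exists_ord3; exists_ord3. Qed.

Lemma crown_common_below j1 j2 : j1 != j2 -> exists i, crown i j1 && crown i j2.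
Proof. by case_ord3 j1; case_ord3 j2; exists_ord3. Qed.

Lemma crown_common_above i1 i2 : i1 != i2 -> exists j, crown i1 j && crown i2 j.
Proof. by case_ord3 i1; case_ord3 i2; exists_ord3. Qed.

Lemma crown_below_one_of i j1 j2 : j1 != j2 -> crown i j1 || crown i j2.
Proof. by case_ord3 i; case_ord3 j1; case_ord3 j2. Qed.

Lemma crown_above_one_of j i1 i2 : i1 != i2 -> crown i1 j || crown i2 j.
Proof. by case_ord3 j; case_ord3 i1; case_ord3 i2. Qed.

Lemma ord3_cover (i1 i2 i3 i4 : 'I_3) :
  i1 != i2 -> i1 != i3 -> i2 != i3 -> i4 \in [:: i1; i2; i3].
Proof. by case_ord3 i1; case_ord3 i2; case_ord3 i3; case_ord3 i4. Qed.

Lemma succ3_distinct (i : 'I_3) :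
  [&& i != succ3 i, i != succ3 (succ3 i) & succ3 i != succ3 (succ3 i)].
Proof.
case_ord3 i; apply/and3P; split; apply/eqP => /(congr1 val); rewrite /succ3 /= !inordK //.
Qed.

Section SixStack.
Variables (T : finType) (lt : rel T) (N : nat).
Hypotheses (lt_irr : irreflexive lt) (lt_trans : transitive lt) (N_gt0 : 0 < N).
Hypothesis lt_ranked : ranked_of_rank lt N.
Hypothesis lt_crowns : forall r, r < N -> ord_iso lt (level lt r r.+1) C6_lt [set: C6T].

Record crown_enum (r : nat) (a b : 'I_3 -> T) : Prop := CrownEnum {
  crown_rank_bot : forall i, rank lt (a i) = r;
  crown_rank_top : forall j, rank lt (b j) = r.+1;
  crown_inj_bot : injective a;
  crown_inj_top : injective b;
  crown_onto_bot : forall x, rank lt x = r -> exists i, x = a i;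
  crown_onto_top : forall y, rank lt y = r.+1 -> exists j, y = b j;
  crown_lt_enum : forall i j, lt (a i) (b j) = crown i j }.

Lemma rank_le_N x : rank lt x <= N.
Proof. exact: rank_le_ranked. Qed.

Lemma exists_crown_enum r : r < N -> exists a b, crown_enum r a b.
Proof.
move=> rN; have [g [g_inj g_onto g_lt]] := lt_crowns rN.
pose L := level lt r r.+1.
have inL x : (x \in L) = (r <= rank lt x <= r.+1) by rewrite inE.
have g_surj c : exists2 x, x \in L & g x = c.
  have /imsetP[x Lx ->] : c \in g @: L by rewrite g_onto inE.
  by exists x.
have g_bot x : rank lt x = r -> exists i, g x = inl i.
  move=> rx; case gx: (g x) => [i | j]; first by exists i.
  have [w Lw gw] := g_surj (inl j).
  have : lt w x.
    rewrite -g_lt //; first by rewrite gw gx /C6_lt eqxx.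
    by rewrite inL rx leqnn leqnSn.
  by move/(rank_lt lt_irr lt_trans); move: Lw; rewrite inL rx; lia.
have g_top y : rank lt y = r.+1 -> exists j, g y = inr j.
  move=> ry; have [z zy rz] := rank_pred lt_irr lt_trans ry.
  move: zy; rewrite -g_lt ?inL ?ry ?rz ?leqnn ?leqnSn //.
  by case: (g y) => [i | j]; [case: (g z) | exists j].
have [a aP] : exists a : 'I_3 -> T, forall i, a i \in L /\ g (a i) = inl i.
  apply: (@fin_all_exists _ (fun=> T) (fun i x => x \in L /\ g x = inl i)) => i.
  by have [x] := g_surj (inl i); exists x.
have [b bP] : exists b : 'I_3 -> T, forall j, b j \in L /\ g (b j) = inr j.
  apply: (@fin_all_exists _ (fun=> T) (fun j x => x \in L /\ g x = inr j)) => j.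
  by have [x] := g_surj (inr j); exists x.
exists a, b; split.
- move=> i; have [+ gai] := aP i; rewrite inL => /andP[r1 r2].
  have [// | ra] : rank lt (a i) = r \/ rank lt (a i) = r.+1 by lia.
  by have [j] := g_top _ ra; rewrite gai.
- move=> j; have [+ gbj] := bP j; rewrite inL => /andP[r1 r2].
  have [rb | //] : rank lt (b j) = r \/ rank lt (b j) = r.+1 by lia.
  by have [i] := g_bot _ rb; rewrite gbj.
- by move=> i i' /(congr1 g); rewrite (aP i).2 (aP i').2 => -[].
- by move=> j j' /(congr1 g); rewrite (bP j).2 (bP j').2 => -[].
- move=> x rx; have [i gx] := g_bot x rx; exists i; apply: g_inj (aP i).1 _.
    by rewrite inL rx leqnn leqnSn.
  by rewrite gx (aP i).2.
- move=> y ry; have [j gy] := g_top y ry; exists j; apply: g_inj (bP j).1 _.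
    by rewrite inL ry leqnn leqnSn.
  by rewrite gy (bP j).2.
- by move=> i j; rewrite -g_lt ?(aP i).1 ?(bP j).1 // (aP i).2 (bP j).2.
Qed.

Lemma crown_enum_below y : 0 < rank lt y ->
  exists a b j, crown_enum (rank lt y).-1 a b /\ y = b j.
Proof.
move=> y_gt0; have [|a [b cr]] := @exists_crown_enum (rank lt y).-1.
  by have := rank_le_N y; lia.
have [j yj] := crown_onto_top cr (esym (prednK y_gt0)).
by exists a, b, j.
Qed.

Lemma crown_enum_above x : rank lt x < N ->
  exists a b i, crown_enum (rank lt x) a b /\ x = a i.
Proof.
move=> xN; have [a [b cr]] := exists_crown_enum xN.
by have [i xi] := crown_onto_bot cr (erefl _); exists a, b, i.
Qed.

Lemma rank_not_below y : 0 < rank lt y -> exists2 x, rank lt x = (rank lt y).-1 & ~~ lt x y.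
Proof.
move=> /crown_enum_below[a [b [j [cr yj]]]]; subst y; have [i ni] := crown_not_below j.
by exists (a i); rewrite ?(crown_rank_bot cr) ?(crown_lt_enum cr).
Qed.

Lemma rank_not_above x : rank lt x < N -> exists2 y, rank lt y = (rank lt x).+1 & ~~ lt x y.
Proof.
move=> /crown_enum_above[a [b [i [cr xi]]]]; subst x; have [j nj] := crown_not_above i.
by exists (b j); rewrite ?(crown_rank_top cr) ?(crown_lt_enum cr).
Qed.

Lemma rank_two_below y : 0 < rank lt y -> exists x1 x2,
  [/\ x1 != x2, rank lt x1 = (rank lt y).-1, rank lt x2 = (rank lt y).-1, lt x1 y & lt x2 y].
Proof.
move=> /crown_enum_below[a [b [j [cr yj]]]]; subst y.
have [i1 [i2 /and3P[ne c1 c2]]] := crown_two_below j.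
exists (a i1), (a i2).
by rewrite !(crown_rank_bot cr) !(crown_lt_enum cr) (inj_eq (crown_inj_bot cr)).
Qed.

Lemma rank_two_above x : rank lt x < N -> exists y1 y2,
  [/\ y1 != y2, rank lt y1 = (rank lt x).+1, rank lt y2 = (rank lt x).+1, lt x y1 & lt x y2].
Proof.
move=> /crown_enum_above[a [b [i [cr xi]]]]; subst x.
have [j1 [j2 /and3P[ne c1 c2]]] := crown_two_above i.
exists (b j1), (b j2).
by rewrite !(crown_rank_top cr) !(crown_lt_enum cr) (inj_eq (crown_inj_top cr)).
Qed.

Lemma rank_common_below y1 y2 : y1 != y2 -> rank lt y1 = rank lt y2 -> 0 < rank lt y1 ->
  exists2 x, rank lt x = (rank lt y1).-1 & lt x y1 && lt x y2.
Proof.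
move=> ne e y_gt0; have [a [b [j1 [cr y1j]]]] := crown_enum_below y_gt0; subst y1.
have [|j2 y2j] := crown_onto_top cr (y := y2); first by rewrite -e prednK.
subst y2; have [|i /andP[c1 c2]] := crown_common_below (j1 := j1) (j2 := j2).
  by apply: contra ne => /eqP ->.
by exists (a i); rewrite ?(crown_rank_bot cr) // !(crown_lt_enum cr) c1 c2.
Qed.

Lemma rank_common_above x1 x2 : x1 != x2 -> rank lt x1 = rank lt x2 -> rank lt x1 < N ->
  exists2 y, rank lt y = (rank lt x1).+1 & lt x1 y && lt x2 y.
Proof.
move=> ne e /crown_enum_above[a [b [i1 [cr x1i]]]].
have [i2 x2i] := crown_onto_bot cr (esym e).
subst x1 x2; have [|j /andP[c1 c2]] := crown_common_above (i1 := i1) (i2 := i2).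
  by apply: contra ne => /eqP ->.
by exists (b j); rewrite ?(crown_rank_top cr) // !(crown_lt_enum cr) c1 c2.
Qed.

Lemma rank_below_one_of x y1 y2 : y1 != y2 ->
  rank lt y1 = (rank lt x).+1 -> rank lt y2 = (rank lt x).+1 -> lt x y1 || lt x y2.
Proof.
move=> ne e1 e2; have [|a [b [i [cr xi]]]] := crown_enum_above (x := x).
  by have := rank_le_N y1; lia.
have [j1 y1j] := crown_onto_top cr e1; have [j2 y2j] := crown_onto_top cr e2.
subst; rewrite !(crown_lt_enum cr); apply: crown_below_one_of.
by apply: contra ne => /eqP ->.
Qed.

Lemma rank_above_one_of y x1 x2 : x1 != x2 ->
  rank lt x2 = rank lt x1 -> rank lt y = (rank lt x1).+1 -> lt x1 y || lt x2 y.
Proof.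
move=> ne e2 ey; have [|a [b [i1 [cr x1i]]]] := crown_enum_above (x := x1).
  by have := rank_le_N y; lia.
have [i2 x2i] := crown_onto_bot cr e2; have [j yj] := crown_onto_top cr ey.
subst; rewrite !(crown_lt_enum cr); apply: crown_above_one_of.
by apply: contra ne => /eqP ->.
Qed.

Lemma level_enum r : r <= N -> exists e : 'I_3 -> T,
  [/\ injective e, forall i, rank lt (e i) = r & forall x, rank lt x = r -> exists i, x = e i].
Proof.
move=> rN; case: (ltnP r N) => [r_lt | r_ge].
  by have [a [b cr]] := exists_crown_enum r_lt; exists a; split; case: cr.
have [|a [b cr]] := @exists_crown_enum N.-1; first by rewrite prednK.
have -> : r = N.-1.+1 by lia.
by exists b; split; case: cr.
Qed.

Lemma rank_level_cover a b c x : a != b -> a != c -> b != c ->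
  rank lt b = rank lt a -> rank lt c = rank lt a -> rank lt x = rank lt a ->
  x \in [:: a; b; c].
Proof.
move=> ab ac bc rb rc rx; have [e [e_inj _ e_onto]] := level_enum (rank_le_N a).
have [i1 ea] := e_onto a erefl; have [i2 eb] := e_onto b rb.
have [i3 ec] := e_onto c rc; have [i4 ex] := e_onto x rx.
have index_ne u v k l : u = e k -> v = e l -> u != v -> k != l.
  by move=> -> ->; apply: contra => /eqP ->.
have := ord3_cover i4 (index_ne _ _ _ _ ea eb ab) (index_ne _ _ _ _ ea ec ac)
  (index_ne _ _ _ _ eb ec bc).
by rewrite -(mem_map e_inj) /= -ea -eb -ec -ex.
Qed.

Lemma rank_lt2 x y : (rank lt x).+2 <= rank lt y -> lt x y.
Proof.
move ry : (rank lt y) => s; elim: s y ry => [// | s IH] y ry xs.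
have [z zy rz] := rank_pred lt_irr lt_trans ry.
have [xz | sx] := leqP (rank lt x).+2 s; first exact: lt_trans (IH z rz xz) zy.
have [|y1 [y2 [ne r1 r2 l1 l2]]] := rank_two_below (y := y); first by rewrite ry.
have [|| xy1 | xy2] := orP (rank_below_one_of (x := x) ne _ _); rewrite ?r1 ?r2 ?ry; try lia.
- exact: lt_trans xy1 l1.
- exact: lt_trans xy2 l2.
Qed.

Lemma rank_incomp_le x y : incomp lt x y -> rank lt y <= (rank lt x).+1.
Proof. by case/andP=> nxy _; rewrite leqNgt; apply: contra nxy; apply: rank_lt2. Qed.

Lemma rank_incomp_pair u v w : u != v -> rank lt v = rank lt u ->
  incomp lt w u -> incomp lt w v -> rank lt w = rank lt u.
Proof.
move=> uv ru wu wv; have := rank_incomp_le wu; rewrite incompC in wu.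
have := rank_incomp_le wu; case/andP: wu => uw wu; case/andP: wv => wv vw.
have /eqP nw : rank lt w != (rank lt u).+1.
  by apply/eqP => rw; have := rank_above_one_of uv ru rw; rewrite (negbTE uw) (negbTE vw).
have /eqP nu : rank lt u != (rank lt w).+1.
  apply/eqP => ru1; have := rank_below_one_of uv ru1 (etrans ru ru1).
  by rewrite (negbTE wu) (negbTE wv).
lia.
Qed.

Lemma antichain3_rank a b c : antichain3 lt a b c -> rank lt b = rank lt a /\ rank lt c = rank lt a.
Proof.
case/and5P=> ab ac bc iab /andP[iac ibc].
have iba : incomp lt b a by rewrite incompC.
have ica : incomp lt c a by rewrite incompC.
have icb : incomp lt c b by rewrite incompC.
have := rank_incomp_le iab; have := rank_incomp_le iac; have := rank_incomp_le ibc.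
have := rank_incomp_le iba; have := rank_incomp_le ica; have := rank_incomp_le icb.
have := fun e => rank_incomp_pair ab e ica icb.
have := fun e => rank_incomp_pair ac e iba ibc.
have := fun e => rank_incomp_pair bc e iab iac.
lia.
Qed.

Lemma rank_antichain_level a b c x :
  antichain3 lt a b c -> rank lt x = rank lt a -> x \in [:: a; b; c].
Proof.
move=> abc; have [rb rc] := antichain3_rank abc; case/and5P: abc => ab ac bc _ _.
exact: rank_level_cover.
Qed.

Lemma six_stack_like : stack_like lt (rank lt) N.
Proof.
split.
- exact: lt_trans.
- exact: rank_lt.
- exact: rank_lt2.
- exact: rank_le_N.
- by move=> r /level_enum[e [_ re _]]; exists (e ord0).
- exact: rank_not_below.
- exact: rank_not_above.
- exact: rank_two_below.
- exact: rank_two_above.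
- exact: rank_common_below.
- exact: rank_common_above.
- exact: rank_antichain_level.
Qed.

End SixStack.

Lemma lt_leR_trans (T : finType) (lt : rel T) : transitive lt ->
  forall x y z, lt x y -> leR lt y z -> lt x z.
Proof. by move=> lt_trans x y z xy /predU1P[<- // | yz]; apply: lt_trans yz. Qed.

Definition level_sub (T : finType) (lev : T -> nat) (Q : {set T}) (r : nat) : Prop :=
  forall x, lev x = r -> x \in Q.

(* What is used of a decomposition of Q, indexed by [bl], into the blocks of a
   tower of sections: a block is either a two-element antichain or a section,
   and every element of a section lies in a three-element antichain. *)
Definition tower_blocks (T : finType) (lt : rel T) (B : eqType) (Q : {set T})
    (bl : T -> B) : Prop :=
  [/\ {in Q &, forall q q', incomp lt q q' -> bl q = bl q'},
      {in Q, forall q, (exists a c, [/\ a \in Q, c \in Q & antichain3 lt q a c]) \/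
         {in Q &, forall q1 q2, bl q1 = bl q -> bl q2 = bl q ->
            [|| q1 == q, q2 == q | q1 == q2]}} &
      {in Q, forall q, exists2 q', q' \in Q & (q' != q) && incomp lt q q'}].

Lemma tower_blocks_flip (T : finType) (lt : rel T) (B : eqType) Q (bl : T -> B) :
  tower_blocks lt Q bl -> tower_blocks (flip lt) Q bl.
Proof.
case=> bl_incomp bl_small partner; split.
- by move=> q q' qQ q'Q; rewrite (incomp_flip lt); apply: bl_incomp.
- move=> q qQ; case: (bl_small q qQ) => [[a [c [aQ cQ qac]]] | small]; last by right.
  by left; exists a, c; rewrite (antichain3_flip lt).
- by move=> q qQ; have [q' q'Q] := partner q qQ; exists q'; rewrite ?(incomp_flip lt).
Qed.

Lemma stack_antichain_level_sub (T : finType) (lt : rel T) lev N (Q : {set T}) q a c :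
  stack_like lt lev N -> q \in Q -> a \in Q -> c \in Q -> antichain3 lt q a c ->
  level_sub lev Q (lev q).
Proof.
move=> S qQ aQ cQ qac x /(stack_antichain_level S qac).
by rewrite !inE => /or3P[] /eqP->.
Qed.

Section RetractLevels.
Variables (T : finType) (lt : rel T) (lev : T -> nat) (N : nat).
Hypothesis S : stack_like lt lev N.
Variables (Q : {set T}) (f : T -> T) (B : eqType) (bl : T -> B).
Hypotheses (f_Q : forall x, f x \in Q) (f_mono : order_preserving lt f).
Hypothesis f_id : {in Q, forall q, f q = q}.
Hypothesis blocks : tower_blocks lt Q bl.

Lemma level_sub_succ_of_mem b q :
  level_sub lev Q b -> q \in Q -> lev q = b.+1 -> level_sub lev Q b.+1.
Proof.
move=> full qQ qb; have q_gt0 : 0 < lev q by rewrite qb.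
have [m mb mq] := stack_not_below S q_gt0.
have [x1 [x2 [x12 r1 r2 l1 l2]]] := stack_two_below S q_gt0.
rewrite qb /= in mb r1 r2.
have [x [xb xq xm]] : exists x, [/\ lev x = b, lt x q & x != m].
  case: (eqVneq x1 m) => [x1m | x1m]; last by exists x1.
  by exists x2; split=> //; apply/eqP => x2m; rewrite -x2m l2 in mq.
have mQ := full m mb; have xQ := full x xb.
have iqm : incomp lt q m.
  by rewrite /incomp mq andbT; apply/negP => /(stack_lt_lev S); rewrite qb mb ltnNge leqnSn.
have imx : incomp lt m x by apply: (stack_incomp_lev S); rewrite mb xb.
case: blocks => bl_incomp bl_small _.
case: (bl_small q qQ) => [[a [c [aQ cQ qac]]] | small].
  by rewrite -qb; apply: stack_antichain_level_sub S qQ aQ cQ qac.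
have bqm := bl_incomp q m qQ mQ iqm; have bmx := bl_incomp m x mQ xQ imx.
have := small m x mQ xQ (esym bqm) (etrans (esym bmx) (esym bqm)).
have mq' : m != q by apply/eqP => mqe; move: mb; rewrite mqe qb; lia.
have xq' : x != q by apply/eqP => xqe; move: xb; rewrite xqe qb; lia.
by rewrite (negbTE mq') (negbTE xq') eq_sym (negbTE xm).
Qed.

Lemma retract_above b w : level_sub lev Q b -> {in Q, forall q, lev q != b.+1} ->
  lev w = b.+1 -> b.+2 <= lev (f w).
Proof.
move=> full skip wb; have w_gt0 : 0 < lev w by rewrite wb.
have [x1 [x2 [x12 r1 r2 l1 l2]]] := stack_two_below S w_gt0.
rewrite wb /= in r1 r2.
rewrite ltnNge; apply/negP => fw_small.
have fw_le : lev (f w) <= b by have := skip _ (f_Q w); lia.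
have eq_fw x : lev x = b -> lt x w -> x = f w.
  move=> xb xw; have : leR lt x (f w).
    by rewrite -(f_id (full x xb)); apply: f_mono; rewrite /leR xw orbT.
  by case/predU1P => // /(stack_lt_lev S); rewrite xb; lia.
by move: x12; rewrite (eq_fw x1 r1 l1) (eq_fw x2 r2 l2) eqxx.
Qed.

Lemma mem_level_succ b : level_sub lev Q b -> b < N -> exists2 q, q \in Q & lev q = b.+1.
Proof.
move=> full bN; case: (boolP [exists q in Q, lev q == b.+1]).
  by case/exists_inP => q qQ /eqP qb; exists q.
move/exists_inPn => skip; exfalso.
pose P q := (q \in Q) && (b.+2 <= lev q).
have fP w : lev w = b.+1 -> P (f w) by move=> wb; rewrite /P f_Q retract_above.
have [w0 w0b] := stack_lev_inhabited S bN.
case: (@arg_minnP _ (f w0) P lev (fP _ w0b)) => u /andP[uQ ub] umin.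
have [_ _ partner] := blocks.
have [v vQ /andP[vu iuv]] := partner u uQ.
have vP : P v.
  have := stack_lev_incomp S iuv; rewrite incompC in iuv.
  have := stack_lev_incomp S iuv; have := skip v vQ.
  by rewrite /P vQ /=; lia.
case: (@arg_minnP _ v (fun y => P y && leR lt y v) lev) => [|v' /andP[/andP[v'Q v'b] v'v] v'min].
  by rewrite vP /leR eqxx.
have uv' : u != v'.
  apply: contraTneq v'v => <-; case/andP: iuv => nuv _.
  by rewrite /leR negb_or nuv andbT; apply: contra vu => /eqP->.
have [w wb /andP[wu wv']] := stack_common_lower S uv' ub v'b.
have fw_below y : y \in Q -> lt w y -> leR lt (f w) y.
  by move=> yQ wy; rewrite -(f_id yQ); apply: f_mono; rewrite /leR wy orbT.
have fwu : f w = u.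
  case/predU1P: (fw_below u uQ wu) => // fw_u.
  by have := umin _ (fP w wb); rewrite leqNgt (stack_lt_lev S fw_u).
have fwv' : f w = v'.
  case/predU1P: (fw_below v' v'Q wv') => // fw_v'.
  have := v'min (f w); rewrite fP //= /leR (lt_leR_trans (stack_trans S) fw_v' v'v) orbT.
  by move=> /(_ isT); rewrite leqNgt (stack_lt_lev S fw_v').
by move: uv'; rewrite -fwu -fwv' eqxx.
Qed.

Lemma level_sub_succ b : level_sub lev Q b -> b < N -> level_sub lev Q b.+1.
Proof.
move=> full bN; have [q qQ qb] := mem_level_succ full bN.
exact: level_sub_succ_of_mem full qQ qb.
Qed.

End RetractLevels.

Section RetractAllLevels.
Variables (T : finType) (lt : rel T) (lev : T -> nat) (N : nat).
Hypothesis S : stack_like lt lev N.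
Variables (Q : {set T}) (f : T -> T) (B : eqType) (bl : T -> B).
Hypotheses (f_Q : forall x, f x \in Q) (f_mono : order_preserving lt f).
Hypothesis f_id : {in Q, forall q, f q = q}.
Hypothesis blocks : tower_blocks lt Q bl.

Lemma level_sub_pred b : 0 < b <= N -> level_sub lev Q b -> level_sub lev Q b.-1.
Proof.
case/andP=> b_gt0 bN full x xb.
have f_mono' : order_preserving (flip lt) f.
  by move=> y z; rewrite !(leR_flip lt); apply: f_mono.
have xN := stack_lev_le S x.
apply: (level_sub_succ (stack_like_flip S) f_Q f_mono' f_id (tower_blocks_flip blocks)
  (b := N - b)); [move=> y yb; apply: full; have := stack_lev_le S y | |]; lia.
Qed.

Lemma level_sub_all r : r <= N -> level_sub lev Q r -> Q = [set: T].
Proof.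
move=> rN full; apply/setP => x; rewrite inE.
have up d : r + d <= N -> level_sub lev Q (r + d).
  elim: d => [| d IH] rd; first by rewrite addn0.
  by rewrite addnS; apply: (level_sub_succ S f_Q f_mono f_id blocks); [apply: IH | ]; lia.
have down d : d <= r -> level_sub lev Q (r - d).
  elim: d => [| d IH] dr; first by rewrite subn0.
  have -> : r - d.+1 = (r - d).-1 by lia.
  by apply: level_sub_pred; [apply/andP; split | apply: IH]; lia.
have := stack_lev_le S x; case: (leqP r (lev x)) => rx xN.
- by apply: (up (lev x - r)); lia.
- by apply: (down (r - lev x)); lia.
Qed.

End RetractAllLevels.

Section OrdIso.
Variables (T U : finType) (lt : rel T) (ltU : rel U) (X : {set T}) (g : T -> U).
Hypothesis g_iso :
  [/\ {in X &, injective g}, g @: X = [set: U] & {in X &, forall x y, ltU (g x) (g y) = lt x y}].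

Lemma ord_iso_preimage u : exists2 x, x \in X & g x = u.
Proof.
case: g_iso => _ g_onto _.
have /imsetP[x xX ->] : u \in g @: X by rewrite g_onto inE.
by exists x.
Qed.

Lemma ord_iso_eq : {in X &, forall x y, (g x == g y) = (x == y)}.
Proof. by case: g_iso => g_inj _ _ x y xX yX; apply/eqP/eqP => [/g_inj -> | ->]. Qed.

Lemma ord_iso_incomp : {in X &, forall x y, incomp ltU (g x) (g y) = incomp lt x y}.
Proof. by case: g_iso => _ _ g_lt x y xX yX; rewrite /incomp !g_lt. Qed.

Lemma ord_iso_antichain3 a b c : a \in X -> b \in X -> c \in X ->
  antichain3 ltU (g a) (g b) (g c) = antichain3 lt a b c.
Proof. by move=> aX bX cX; rewrite /antichain3 !ord_iso_eq ?ord_iso_incomp. Qed.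

Lemma ord_iso_tower_blocks (B : eqType) (bl : U -> B) :
  tower_blocks ltU [set: U] bl -> tower_blocks lt X (bl \o g).
Proof.
case=> bl_incomp bl_small partner; split.
- by move=> x y xX yX ixy; apply: bl_incomp; rewrite ?inE ?ord_iso_incomp.
- move=> x xX; case: (bl_small (g x)) => [| [a [c [_ _ xac]]] | small]; first by rewrite inE.
    have [a' a'X ga'] := ord_iso_preimage a; have [c' c'X gc'] := ord_iso_preimage c.
    by left; exists a', c'; rewrite -ord_iso_antichain3 ?ga' ?gc'.
  by right=> x1 x2 x1X x2X e1 e2; rewrite -!ord_iso_eq //; apply: small; rewrite ?inE.
- move=> x xX; have [|u _ /andP[ux iu]] := partner (g x); first by rewrite inE.
  have [y yX gy] := ord_iso_preimage u.
  by exists y; rewrite // -ord_iso_eq // -ord_iso_incomp // gy ux iu.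
Qed.

End OrdIso.

Lemma ordinal_sum_incomp (U : finType) (ltU : rel U) k (blk : U -> 'I_k) :
  (forall x y, blk x != blk y -> ltU x y = (blk x < blk y)) ->
  forall x y, incomp ltU x y -> blk x = blk y.
Proof.
move=> blk_lt x y; apply: contraTeq => nxy.
rewrite /incomp (blk_lt _ _ nxy) (blk_lt y x) 1?eq_sym // -negb_or negbK.
by move: nxy; rewrite -val_eqE /=; case: ltngtP.
Qed.

Lemma section_antichain3 (U : finType) (ltU : rel U) (X : {set U}) n
    (R : rel ('I_3 * 'I_n.+1)) :
  section_rel R -> ord_iso ltU X R [set: 'I_3 * 'I_n.+1] ->
  {in X, forall u, exists u1 u2, [/\ u1 \in X, u2 \in X & antichain3 ltU u u1 u2]}.
Proof.
case=> _ _ R_level _ _ [h h_iso] u uX; case hu: (h u) => [i k].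
have [u1 u1X hu1] := ord_iso_preimage h_iso (succ3 i, k).
have [u2 u2X hu2] := ord_iso_preimage h_iso (succ3 (succ3 i), k).
exists u1, u2; split=> //; rewrite -(ord_iso_antichain3 h_iso) // hu hu1 hu2.
case/and3P: (succ3_distinct i) => n1 n2 n3.
by rewrite /antichain3 /incomp !xpair_eqE eqxx !andbT n1 n2 n3 !R_level.
Qed.

Lemma antichain2_small (U : finType) (ltU : rel U) (X : {set U}) :
  ord_iso ltU X AC2_lt [set: bool] ->
  {in X, forall u, {in X &, forall u1 u2, [|| u1 == u, u2 == u | u1 == u2]}}.
Proof.
move=> [h h_iso] u uX u1 u2 u1X u2X; rewrite -!(ord_iso_eq h_iso) //.
by case: (h u); case: (h u1); case: (h u2).
Qed.

Lemma antichain2_partner (U : finType) (ltU : rel U) (X : {set U}) :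
  ord_iso ltU X AC2_lt [set: bool] ->
  {in X, forall u, exists2 u', u' \in X & (u' != u) && incomp ltU u u'}.
Proof.
move=> [h h_iso] u uX; have [u' u'X hu'] := ord_iso_preimage h_iso (~~ h u).
exists u' => //; rewrite -(ord_iso_eq h_iso) // -(ord_iso_incomp h_iso) // hu'.
by case: (h u).
Qed.

Lemma ordinal_sum_tower_blocks (U : finType) (ltU : rel U) k (blk : U -> 'I_k) :
  (forall b, is_section ltU [set x | blk x == b]) ->
  (forall x y, blk x != blk y -> ltU x y = (blk x < blk y)) ->
  tower_blocks ltU [set: U] blk.
Proof.
move=> blk_sec blk_lt; split.
- by move=> x y _ _; apply: ordinal_sum_incomp.
- move=> u _; have uB : u \in [set x | blk x == blk u] by rewrite inE.
  case: (blk_sec (blk u)) => [ac2 | [n [R [_ secR isoR]]]].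
    right=> u1 u2 _ _ e1 e2; by apply: (antichain2_small ac2 uB); rewrite inE ?e1 ?e2.
  have [u1 [u2 [_ _ a]]] := section_antichain3 secR isoR uB.
  by left; exists u1, u2; rewrite !inE.
- move=> u _; have uB : u \in [set x | blk x == blk u] by rewrite inE.
  case: (blk_sec (blk u)) => [ac2 | [n [R [_ secR isoR]]]].
    by have [u' _] := antichain2_partner ac2 uB; exists u'; rewrite ?inE.
  have [u1 [u2 [_ _ /and5P[uu1 _ _ iuu1 _]]]] := section_antichain3 secR isoR uB.
  by exists u1; rewrite ?inE // eq_sym uu1.
Qed.

Theorem corollary5p5 (T : finType) (lt : rel T) (Q : {set T}) :
  six_stack lt -> is_retract lt Q -> Q != [set: T] ->
  (exists (U : finType) (ltU : rel U),
      tower_of_sections ltU /\ ord_iso lt Q ltU [set: U]) ->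
  exists (U : finType) (ltU : rel U),
    four_tower ltU /\ ord_iso lt Q ltU [set: U].
Proof.
move=> [[lt_irr lt_trans] [N [N_gt0 [ranked crowns]]]] [f [f_Q f_mono f_id]] QneT
  [U [ltU [[ltU_strict [k [blk [k_gt0 blk_sec blk_lt]]]] [g g_iso]]]].
exists U, ltU; split; last by exists g.
split=> //; exists k, blk; split=> // b.
case: (blk_sec b) => [// | [n [R [_ secR [h h_iso]]]]]; exfalso.
have S := six_stack_like lt_irr lt_trans N_gt0 ranked crowns.
have blocks := ord_iso_tower_blocks g_iso (ordinal_sum_tower_blocks blk_sec blk_lt).
have [u uB _] := ord_iso_preimage h_iso (ord0, ord0).
have [u1 [u2 [_ _ uu12]]] := section_antichain3 secR (ex_intro _ h h_iso) uB.
have [q qQ gq] := ord_iso_preimage g_iso u.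
have [q1 q1Q gq1] := ord_iso_preimage g_iso u1.
have [q2 q2Q gq2] := ord_iso_preimage g_iso u2.
have qq12 : antichain3 lt q q1 q2 by rewrite -(ord_iso_antichain3 g_iso) // gq gq1 gq2.
move/negP: QneT; apply; apply/eqP.
apply: (level_sub_all S f_Q f_mono f_id blocks (stack_lev_le S q)).
exact: stack_antichain_level_sub S qQ q1Q q2Q qq12.
Qed.
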